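(* Let $N\ge2$ and let $\mathcal F_{M,N}$ be the free $\Bbbk$-module on symbols $\bar M_0,\dots,\bar M_{N-1}$. For $l,m,k\ge0$ with $l+m+k+1=N$ put $Z_M^{l,m,k}:=\sum_{j=0}^m(-1)^j\binom mj\bar M_{l+j}$. For $0\le k\le\lfloor N/2\rfloor-1$ put $X_k:=Z_M^{k,k+1,N-2k-2}-Z_M^{k+1,k,N-2k-2}$, and for $j\ge0$, $s\ge1$ with $2j+s\le N-1$ put $X_j^{(s)}:=Z_M^{j,j+s,N-2j-s-1}-Z_M^{j+s,j,N-2j-s-1}$. Then: (i) $X_j^{(s)}=\sum_{k=0}^{\lfloor (s-1)/2\rfloor}(-1)^k\binom{s-k-1}{k}X_{j+k}$ for all such $j,s$; (ii) $X_0,\dots,X_{\lfloor N/2\rfloor-1}$ are $\Bbbk$-linearly independent in $\mathcal F_{M,N}$; (iii) the assignment $Z^{l,m,k}\mapsto$ (class of $Z_M^{l,m,k}$) extends to a well-defined isomorphism of $\Bbbk$-modules $\mathcal{ZF}_N\xrightarrow{\sim}\mathcal F_{M,N}/\langle X_0,\dots,X_{\lfloor N/2\rfloor-1}\rangle$.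
   Context: $\Bbbk$ is a commutative ring. $\mathcal F_N$ is the free $\Bbbk$-module on symbols $F^{l,m,k}$, $l,m,k\ge0$, $l+m+k+1=N$; $\mathcal{ZF}_N:=\mathcal F_N/I$ with $I$ generated by all $F^{l,m,k}-F^{m,l,k}$ and all $F^{l,m+1,k}+F^{l+1,m,k}-F^{l,m,k+1}$; $Z^{l,m,k}$ denotes the image of $F^{l,m,k}$. *)

From HB Require Import structures.
From mathcomp Require Import all_boot all_order all_algebra.
Set Implicit Arguments. Unset Strict Implicit. Unset Printing Implicit Defensive.
Import Order.TTheory GRing.Theory Num.Theory.
Local Open Scope ring_scope.

Definition gen_span (R : comNzRingType) (V : lmodType R) (P : V -> Prop) (v : V) : Prop :=
  exists (n : nat) (c : 'I_n -> R) (g : 'I_n -> V),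
    (forall i, P (g i)) /\ v = \sum_(i < n) c i *: g i.

(* realized as 'rV[R]_N; \bar M_i is the i-th standard basis row vector
   (for i >= N the expression is 0, but it is only used for i < N). *)
Definition Mbar (R : comNzRingType) (N i : nat) : 'rV[R]_N :=
  \row_(j < N) (nat_of_ord j == i)%:R.

(* Z_M^{l,m,k} = sum_{j=0}^m (-1)^j C(m,j) \bar M_{l+j}  (independent of k) *)
Definition ZM (R : comNzRingType) (N l m : nat) : 'rV[R]_N :=
  \sum_(j < m.+1) (((-1) ^+ j * ('C(m, j))%:R) *: Mbar R N (l + j)).

Definition Xk (R : comNzRingType) (N k : nat) : 'rV[R]_N :=
  ZM R N k k.+1 - ZM R N k.+1 k.

Definition Xjs (R : comNzRingType) (N j s : nat) : 'rV[R]_N :=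
  ZM R N j (j + s) - ZM R N (j + s) j.

Notation trip N :=
  {t : 'I_N * 'I_N * 'I_N | (t.1.1 + t.1.2 + t.2).+1 == N}.

Notation FN R N := {ffun trip N -> R^o}.

Definition Fsym (R : comNzRingType) (N l m k : nat) : FN R N :=
  [ffun t : trip N =>
     (((nat_of_ord (val t).1.1 == l) && (nat_of_ord (val t).1.2 == m)
       && (nat_of_ord (val t).2 == k)) : bool)%:R].

Definition Igen (R : comNzRingType) (N : nat) (u : FN R N) : Prop :=
  (exists l m k : nat, (l + m + k + 1)%N = N /\ u = Fsym R N l m k - Fsym R N m l k)
  \/ (exists l m k : nat, (l + m + k + 2)%N = N /\
        u = Fsym R N l m.+1 k + Fsym R N l.+1 m k - Fsym R N l m k.+1).

Definition Xgen (R : comNzRingType) (N : nat) (v : 'rV[R]_N) : Prop :=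
  exists k : nat, (k < N./2)%N /\ v = Xk R N k.

Definition phi (R : comNzRingType) (N : nat) (u : FN R N) : 'rV[R]_N :=
  \sum_(t : trip N) (u t *: ZM R N (val t).1.1 (val t).1.2).

(* Identify \bar M_i with 'X^i, so that Z_M^{l,m,k} is the truncation of
   X^l (1 - X)^m and X_j^{(s)} that of (X (1 - X))^j ((1 - X)^s - X^s).  For
   x + y = 1 one has y^s - x^s = (y - x) sum_k (-1)^k C(s-1-k, k) (xy)^k, which
   gives (i); X_k = X^k (1 - X)^k (1 - 2X) has lowest term X^k, which gives (ii).
   For (iii), the symmetry relations are sent to the X_j^{(s)}, which lie in the
   span of the X_k by (i), and the other relations to 0 because
   Z_M^{l,m+1} = Z_M^{l,m} - Z_M^{l+1,m}.  By the same recurrence every F^{l,m,k}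
   is congruent modulo I to a combination of the F^{i,0,N-1-i}, so sending
   \bar M_i to F^{i,0,N-1-i} inverts the induced map. *)

From HB Require Import structures.
From mathcomp Require Import all_boot all_order all_algebra.
From mathcomp Require Import zify ring.
Set Implicit Arguments.
Unset Strict Implicit.
Unset Printing Implicit Defensive.
Import Order.TTheory GRing.Theory Num.Theory.
Local Open Scope ring_scope.

Section GenSpan.
Variables (R : comNzRingType) (V : lmodType R) (P : V -> Prop).

Lemma gen_span0 : gen_span P 0.
Proof. by exists 0%N, (fun _ => 0), (fun _ => 0); split => [[]//|]; rewrite big_ord0. Qed.

Lemma mem_gen_span v : P v -> gen_span P v.
Proof.
by move=> Pv; exists 1%N, (fun _ => 1), (fun _ => v); rewrite big_ord1 scale1r.
Qed.

Lemma gen_spanD u v : gen_span P u -> gen_span P v -> gen_span P (u + v).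
Proof.
move=> [n1 [c1 [g1 [P1 ->]]]] [n2 [c2 [g2 [P2 ->]]]].
exists (n1 + n2)%N, (fun i => match split i with inl a => c1 a | inr b => c2 b end),
  (fun i => match split i with inl a => g1 a | inr b => g2 b end).
split=> [i|]; first by case: (split i).
rewrite big_split_ord; congr (_ + _); apply: eq_bigr => i _.
  by rewrite (unsplitK (inl i)).
by rewrite (unsplitK (inr i)).
Qed.

Lemma gen_spanZ a v : gen_span P v -> gen_span P (a *: v).
Proof.
move=> [n [c [g [Pg ->]]]]; exists n, (fun i => a * c i), g; split => //.
by rewrite scaler_sumr; apply: eq_bigr => i _; rewrite scalerA.
Qed.

Lemma gen_spanN v : gen_span P v -> gen_span P (- v).
Proof. by rewrite -scaleN1r; apply: gen_spanZ. Qed.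

Lemma gen_spanB u v : gen_span P u -> gen_span P v -> gen_span P (u - v).
Proof. by move=> Pu Pv; apply/gen_spanD/gen_spanN. Qed.

Lemma gen_span_sum (I : finType) (F : I -> V) :
  (forall i, gen_span P (F i)) -> gen_span P (\sum_i F i).
Proof. by move=> PF; apply: big_ind => //; [apply: gen_span0 | apply: gen_spanD]. Qed.

End GenSpan.

Section GenSpanLinear.
Variables (R : comNzRingType) (V W : lmodType R) (P : V -> Prop) (Q : W -> Prop).
Variable f : {linear V -> W}.

Lemma gen_span_linear v :
  (forall u, P u -> gen_span Q (f u)) -> gen_span P v -> gen_span Q (f v).
Proof.
move=> PQ [n [c [g [Pg ->]]]]; rewrite linear_sum; apply: gen_span_sum => i.
by rewrite linearZ; apply/gen_spanZ/PQ.
Qed.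

Lemma gen_span_lift w :
  (forall w, Q w -> exists v, gen_span P v /\ f v = w) ->
  gen_span Q w -> exists v, gen_span P v /\ f v = w.
Proof.
move=> QP [n [c [g [Qg ->]]]].
apply: (big_ind (fun w => exists v, gen_span P v /\ f v = w)).
- by exists 0; rewrite linear0; split; first exact: gen_span0.
- move=> _ _ [v1 [Pv1 <-]] [v2 [Pv2 <-]].
  by exists (v1 + v2); rewrite linearD; split; first exact: gen_spanD.
move=> i _; have [v [Pv <-]] := QP _ (Qg i).
by exists (c i *: v); rewrite linearZ; split; first exact: gen_spanZ.
Qed.

End GenSpanLinear.

Section Chebyshev.
Variables (R : comNzRingType) (p : R).

Definition cheb_coef (t k : nat) : R := (-1) ^+ k * ('C(t - k, k))%:R * p ^+ k.

Definition cheb_sum (t : nat) : R := \sum_(k < t.+1) cheb_coef t k.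

Lemma cheb_coef0 t : cheb_coef t 0 = 1.
Proof. by rewrite /cheb_coef bin0 !expr0 !mulr1. Qed.

Lemma cheb_coef_small t k : (t < k)%N -> cheb_coef t k = 0.
Proof. by move=> ltk; rewrite /cheb_coef bin_small ?mulr0 ?mul0r //; lia. Qed.

Lemma cheb_sum_widen t n : (t < n)%N -> \sum_(k < n) cheb_coef t k = cheb_sum t.
Proof.
elim: n => // n IHn; rewrite ltnS leq_eqVlt => /orP[/eqP-> //|ltn].
by rewrite big_ord_recr /= cheb_coef_small // addr0 IHn.
Qed.

Lemma binS_diag t k : 'C(t.+1 - k, k.+1) = ('C(t - k, k) + 'C(t - k, k.+1))%N.
Proof.
have [lekt|ltkt] := leqP k t; first by rewrite subSn // binS addnC.
by rewrite (_ : (t.+1 - k)%N = 0%N) 1?(_ : (t - k)%N = 0%N) ?bin0n //; lia.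
Qed.

Lemma cheb_coefS t k : cheb_coef t.+2 k.+1 = cheb_coef t.+1 k.+1 - p * cheb_coef t k.
Proof.
rewrite /cheb_coef !subSS binS_diag natrD !exprS.
by move: ('C(t - k, k)) ('C(t - k, k.+1)) => a b; ring.
Qed.

Lemma cheb_sumS t : cheb_sum t.+2 = cheb_sum t.+1 - p * cheb_sum t.
Proof.
rewrite /cheb_sum big_ord_recl [in RHS]big_ord_recl !cheb_coef0.
under eq_bigr => k _ do rewrite cheb_coefS.
rewrite sumrB -mulr_sumr big_ord_recr /= cheb_coef_small // addr0.
by rewrite cheb_sum_widen // addrA.
Qed.

Lemma cheb_sum_powB x y : x + y = 1 -> p = x * y ->
  forall t, y ^+ t.+1 - x ^+ t.+1 = (y - x) * cheb_sum t.
Proof.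
move=> xy1 pxy t; suff: y ^+ t.+1 - x ^+ t.+1 = (y - x) * cheb_sum t /\
  y ^+ t.+2 - x ^+ t.+2 = (y - x) * cheb_sum t.+1 by case.
elim: t => [|t [IHt IHt1]].
  rewrite /cheb_sum !big_ord_recr !big_ord0 /= cheb_coef0 /cheb_coef bin0n /=.
  have -> : y ^+ 2 - x ^+ 2 = (y - x) * (x + y) by ring.
  by rewrite xy1 bin0; split; ring.
split=> //; rewrite cheb_sumS mulrBr mulrCA -IHt -IHt1 pxy.
have -> : y ^+ t.+3 - x ^+ t.+3 =
    (x + y) * (y ^+ t.+2 - x ^+ t.+2) - x * y * (y ^+ t.+1 - x ^+ t.+1).
  by rewrite !exprS; ring.
by rewrite xy1 mul1r.
Qed.

End Chebyshev.

Section PolynomialModel.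
Variables (R : comNzRingType) (N : nat).

Lemma Mbar_poly_rV i : Mbar R N i = poly_rV 'X^i.
Proof. by apply/rowP => j; rewrite !mxE coefXn. Qed.

Lemma ZM_poly_rV l m : ZM R N l m = poly_rV ('X^l * (1 - 'X) ^+ m).
Proof.
rewrite /ZM exprBn mulr_sumr linear_sum; apply: eq_bigr => i _.
rewrite Mbar_poly_rV -linearZ; congr poly_rV.
rewrite -mul_polyC polyCM polyC_natr rmorphXn rmorphN rmorph1 exprD expr1n mulr1.
by move: ('C(m, i)) (nat_of_ord i) => c k; ring.
Qed.

Lemma ZM0 l : ZM R N l 0 = Mbar R N l.
Proof. by rewrite ZM_poly_rV mulr1 Mbar_poly_rV. Qed.

Lemma ZMS l m : ZM R N l m.+1 = ZM R N l m - ZM R N l.+1 m.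
Proof. by rewrite !ZM_poly_rV -linearB exprS exprSr; congr poly_rV; ring. Qed.

Lemma Xjs_poly_rV j s :
  Xjs R N j s = poly_rV (('X * (1 - 'X)) ^+ j * ((1 - 'X) ^+ s - 'X ^+ s)).
Proof.
by rewrite /Xjs !ZM_poly_rV -linearB !exprD exprMn; congr poly_rV; ring.
Qed.

Lemma Xk_poly_rV k : Xk R N k = poly_rV (('X * (1 - 'X)) ^+ k * ((1 - 'X) - 'X)).
Proof.
have -> : Xk R N k = Xjs R N k 1 by rewrite /Xjs addn1.
by rewrite Xjs_poly_rV !expr1.
Qed.

Lemma Xjs_cheb j t : Xjs R N j t.+1 =
  \sum_(k < t.+1) (((-1) ^+ k * ('C(t - k, k))%:R) *: Xk R N (j + k)).
Proof.
have X1X : 'X + (1 - 'X) = 1 :> {poly R} by rewrite addrC subrK.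
rewrite Xjs_poly_rV (cheb_sum_powB X1X erefl) /cheb_sum !mulr_sumr linear_sum.
apply: eq_bigr => k _; rewrite Xk_poly_rV -linearZ; congr poly_rV.
rewrite /cheb_coef -mul_polyC polyCM polyC_natr rmorphXn rmorphN rmorph1 exprD.
by move: ('C(t - k, k)) => c; ring.
Qed.

Lemma Xjs_expansion j s : (1 <= s)%N ->
  Xjs R N j s = \sum_(k < (s.-1)./2.+1)
                  (((-1) ^+ k * ('C(s - k - 1, k))%:R) *: Xk R N (j + k)).
Proof.
case: s => // t _; rewrite Xjs_cheb /=.
have t_halves := odd_double_half t; rewrite -addnn in t_halves.
under [RHS]eq_bigr => k _ do rewrite subn1 subSKn.
rewrite [RHS](big_ord_widen t.+1
  (fun k => ((-1) ^+ k * ('C(t - k, k))%:R) *: Xk R N (j + k))) ?[RHS]big_mkcond /=;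
  last by lia.
apply: eq_bigr => k _; case: ifP => // /negbT; rewrite -leqNgt => ltk.
by rewrite bin_small ?mulr0 ?scale0r //; lia.
Qed.

End PolynomialModel.

Section UnitriangularFree.
Variables (R : comNzRingType) (n : nat) (P : 'I_n -> {poly R}).
Hypothesis P_low : forall (k : 'I_n) i, (i < k)%N -> (P k)`_i = 0.
Hypothesis P_diag : forall k : 'I_n, (P k)`_k = 1.

Lemma unitriangular_free (c : 'I_n -> R) :
  (forall i, (i < n)%N -> (\sum_k c k *: P k)`_i = 0) -> forall k, c k = 0.
Proof.
move=> sum0; suff c0 m : forall k : 'I_n, (k < m)%N -> c k = 0.
  by move=> k; apply: (c0 k.+1).
elim: m => // m IHm k; rewrite ltnS leq_eqVlt => /orP[/eqP km|]; last exact: IHm.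
have := sum0 k (ltn_ord k); rewrite coef_sum (bigD1 k) //= coefZ P_diag mulr1.
rewrite big1 ?addr0 // => i ik; rewrite coefZ.
have [ki|ik'] := ltnP k i; first by rewrite P_low ?mulr0.
by rewrite IHm ?mul0r // -km ltn_neqAle ik' andbT; exact: ik.
Qed.

End UnitriangularFree.

Lemma Xk_free (R : comNzRingType) (N : nat) (c : 'I_(N./2) -> R) :
  \sum_(k < N./2) c k *: Xk R N k = 0 -> forall k, c k = 0.
Proof.
pose P (k : 'I_(N./2)) : {poly R} := ('X * (1 - 'X)) ^+ k * ((1 - 'X) - 'X).
have PE k : P k = 'X^k * ((1 - 'X) ^+ k * ((1 - 'X) - 'X)) by rewrite /P exprMn mulrA.
move=> sum0; apply: (@unitriangular_free _ _ P) => [k i ik|k|i iN].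
- by rewrite PE coefXnM ik.
- by rewrite PE coefXnM ltnn subnn -horner_coef0 !hornerE !subr0 expr1n mulr1.
have iN' : (i < N)%N by apply: leq_trans iN _; rewrite -{2}(odd_double_half N); lia.
move: sum0; under eq_bigr => k _ do rewrite Xk_poly_rV -linearZ.
by rewrite -linear_sum => /rowP /(_ (Ordinal iN')); rewrite !mxE.
Qed.

Section Presentation.
Variables (R : comNzRingType) (N : nat).

Lemma phi_is_semilinear : semilinear (@phi R N).
Proof.
split=> [a u|u w]; rewrite /phi.
  by rewrite scaler_sumr; apply: eq_bigr => t _; rewrite ffunE scalerA.
by rewrite -big_split; apply: eq_bigr => t _; rewrite ffunE scalerDl.
Qed.

HB.instance Definition _ :=
  GRing.isSemilinear.Build R (FN R N) 'rV[R]_N _ (@phi R N) phi_is_semilinear.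

Lemma Fsym_ffun (t : trip N) :
  Fsym R N (val t).1.1 (val t).1.2 (val t).2 = [ffun t' => (t' == t)%:R].
Proof. by apply/ffunP => t'; rewrite !ffunE. Qed.

Lemma exists_trip l m k : (l + m + k + 1)%N = N ->
  exists t : trip N,
    [/\ (val t).1.1 = l :> nat, (val t).1.2 = m :> nat & (val t).2 = k :> nat].
Proof.
move=> lmkN; have [ltl ltm ltk] : [/\ (l < N)%N, (m < N)%N & (k < N)%N] by split; lia.
have lmkN' : (l + m + k).+1 == N by apply/eqP; lia.
by exists (exist _ (Ordinal ltl, Ordinal ltm, Ordinal ltk) lmkN').
Qed.

Lemma phi_Fsym l m k : (l + m + k + 1)%N = N -> phi (Fsym R N l m k) = ZM R N l m.
Proof.
move=> /exists_trip [t [<- <- <-]]; rewrite Fsym_ffun /phi (bigD1 t) //= ffunE eqxx scale1r.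
by rewrite big1 ?addr0 // => t' /negbTE t't; rewrite ffunE t't scale0r.
Qed.

Lemma Fsym_sum (u : FN R N) :
  u = \sum_(t : trip N) u t *: Fsym R N (val t).1.1 (val t).1.2 (val t).2.
Proof.
apply/ffunP => t0; rewrite sum_ffunE (bigD1 t0) //= Fsym_ffun !ffunE eqxx.
rewrite big1 => [|t /negbTE t0t]; last by rewrite Fsym_ffun !ffunE eq_sym t0t scaler0.
by rewrite addr0 [_ *: _]mulr1.
Qed.

Definition psi (v : 'rV[R]_N) : FN R N := \sum_(i < N) v 0 i *: Fsym R N i 0 (N - 1 - i).

Lemma psi_is_semilinear : semilinear psi.
Proof.
split=> [a v|v w]; rewrite /psi.
  by rewrite scaler_sumr; apply: eq_bigr => i _; rewrite mxE scalerA.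
by rewrite -big_split; apply: eq_bigr => i _; rewrite mxE scalerDl.
Qed.

HB.instance Definition _ :=
  GRing.isSemilinear.Build R 'rV[R]_N (FN R N) _ psi psi_is_semilinear.

Lemma Mbar_delta (i : 'I_N) : Mbar R N i = delta_mx 0 i.
Proof. by apply/rowP => j; rewrite !mxE. Qed.

Lemma psi_Mbar (i : 'I_N) : psi (Mbar R N i) = Fsym R N i 0 (N - 1 - i).
Proof.
rewrite /psi (bigD1 i) //= Mbar_delta mxE !eqxx scale1r.
by rewrite big1 ?addr0 // => j /negbTE ji; rewrite mxE ji scale0r.
Qed.

Lemma phi_psi v : phi (psi v) = v.
Proof.
rewrite [RHS]row_sum_delta linear_sum; apply: eq_bigr => i _.
by rewrite linearZ /= phi_Fsym ?ZM0 ?Mbar_delta //; have := ltn_ord i; lia.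
Qed.

Lemma Fsym_sub_psi_ZM m l k : (l + m + k + 1)%N = N ->
  gen_span (@Igen R N) (Fsym R N l m k - psi (ZM R N l m)).
Proof.
elim: m l k => [|m IHm] l k lmkN.
  have ltl : (l < N)%N by lia.
  rewrite ZM0 (psi_Mbar (Ordinal ltl)) /= (_ : (N - 1 - l)%N = k) ?subrr; last by lia.
  exact: gen_span0.
have Igen_lmk : @Igen R N (Fsym R N l m.+1 k + Fsym R N l.+1 m k - Fsym R N l m k.+1).
  by right; exists l, m, k; split=> //; lia.
rewrite ZMS linearB.
rewrite (_ : _ - _ = (Fsym R N l m.+1 k + Fsym R N l.+1 m k - Fsym R N l m k.+1)
  + (Fsym R N l m k.+1 - psi (ZM R N l m)) - (Fsym R N l.+1 m k - psi (ZM R N l.+1 m))).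
  apply: gen_spanB; last by apply: IHm; lia.
  by apply: gen_spanD (mem_gen_span Igen_lmk) _; apply: IHm; lia.
by rewrite subrKA addrAC addrKA opprK opprB addrA addrAC.
Qed.

Lemma sub_psi_phi (u : FN R N) : gen_span (@Igen R N) (u - psi (phi u)).
Proof.
rewrite {1}[u]Fsym_sum [phi u]/phi [psi _]linear_sum -sumrB; apply: gen_span_sum => t.
rewrite linearZ -scalerBr; apply/gen_spanZ/Fsym_sub_psi_ZM.
by case: t => [[[a b] c] /= /eqP]; lia.
Qed.

End Presentation.

Lemma Xjs_in_span (R : comNzRingType) (N j s : nat) :
  (1 <= s)%N -> (2 * j + s <= N - 1)%N -> gen_span (@Xgen R N) (Xjs R N j s).
Proof.
move=> s1 jsN; rewrite Xjs_expansion //; apply: gen_span_sum => k.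
apply/gen_spanZ/mem_gen_span; exists (j + k)%N; split=> //.
have := ltn_ord k; have := odd_double_half s.-1; have := odd_double_half N.
rewrite -!addnn; case: (odd _); case: (odd _) => /=; lia.
Qed.

Lemma phi_Igen (R : comNzRingType) (N : nat) (u : FN R N) :
  @Igen R N u -> gen_span (@Xgen R N) (phi u).
Proof.
case=> [[l [m [k [lmkN ->]]]]|[l [m [k [lmkN ->]]]]].
  have mlkN : (m + l + k + 1)%N = N by rewrite -lmkN (addnC m).
  rewrite linearB /= !phi_Fsym //.
  have [lm|ml|->] := ltngtP l m; last by rewrite subrr; exact: gen_span0.
    rewrite -(subnKC (ltnW lm)); apply: Xjs_in_span; lia.
  rewrite -(subnKC (ltnW ml)) -opprB; apply/gen_spanN/Xjs_in_span; lia.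
rewrite linearB linearD /= !phi_Fsym; try lia.
by rewrite ZMS subrK subrr; exact: gen_span0.
Qed.

Lemma Xgen_lift (R : comNzRingType) (N : nat) (v : 'rV[R]_N) :
  @Xgen R N v -> exists u, gen_span (@Igen R N) u /\ phi u = v.
Proof.
move=> [k [kN ->]]; have := odd_double_half N; rewrite -addnn => Nhalf.
exists (Fsym R N k k.+1 (N - 2 * k - 2) - Fsym R N k.+1 k (N - 2 * k - 2)); split.
  by apply: mem_gen_span; left; exists k, k.+1, (N - 2 * k - 2)%N; split=> //; lia.
by rewrite linearB /= !phi_Fsym //; lia.
Qed.

Theorem mainTheorem7 (R : comNzRingType) (N : nat) (hN : (2 <= N)%N) :
  (forall j s : nat, (1 <= s)%N -> (2 * j + s <= N - 1)%N ->
     Xjs R N j s =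
     \sum_(k < (s.-1)./2.+1)
        (((-1) ^+ k * ('C(s - k - 1, k))%:R) *: Xk R N (j + k)))
  /\ (forall c : 'I_(N./2) -> R,
        \sum_(k < N./2) c k *: Xk R N k = 0 -> forall k, c k = 0)
  (* (iii): the map F_N -> F_{M,N}/<X> induced by phi descends to ZF_N = F_N/I
     (well-defined) and the induced map is bijective *)
  /\ ((forall u : FN R N, gen_span (@Igen R N) u -> gen_span (@Xgen R N) (phi u))
      /\ (forall v : 'rV[R]_N, exists u : FN R N, gen_span (@Xgen R N) (v - phi u))
      /\ (forall u : FN R N, gen_span (@Xgen R N) (phi u) -> gen_span (@Igen R N) u)).
Proof.
split; first by move=> j s s1 _; exact: Xjs_expansion.
split; first exact: Xk_free.
split; first by move=> u; apply: gen_span_linear; exact: phi_Igen.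
split; first by move=> v; exists (psi v); rewrite phi_psi subrr; exact: gen_span0.
move=> u /(gen_span_lift (@Xgen_lift R N)) [w [Iw phiw]].
rewrite -(subrK w u); apply: gen_spanD Iw.
by have := sub_psi_phi (u - w); rewrite linearB /= phiw subrr linear0 subr0.
Qed.
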